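(* Let $\Phi:\mathbb{R}\to\mathbb{R}$ be smooth, $\sigma\in\mathbb{R}$, and let $R,V\in C^1(\mathbb{R})\cap L^\infty(\mathbb{R})$ with $R(\varphi)\to r_\pm$ and $V(\varphi)\to v_\pm$ as $\varphi\to\pm\infty$ solve $$\sigma R'(\varphi)+V(\varphi+1)-V(\varphi)=0,\qquad \sigma V'(\varphi)+\Phi'(R(\varphi))-\Phi'(R(\varphi-1))=0\quad(\varphi\in\mathbb{R}).$$ Then $$\sigma[\![r]\!]+[\![v]\!]=0,\qquad \sigma[\![v]\!]+[\![\Phi'(r)]\!]=0,\qquad \sigma[\![\tfrac12 v^2+\Phi(r)]\!]+[\![\Phi'(r)v]\!]=0.$$
   Context: For an observable $\psi(r,v)$, $[\![\psi]\!]:=\psi(r_+,v_+)-\psi(r_-,v_-)$; e.g. $[\![r]\!]=r_+-r_-$, $[\![\Phi'(r)v]\!]=\Phi'(r_+)v_+-\Phi'(r_-)v_-$. *)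

From Stdlib Require Import Reals.
From Coquelicot Require Import Coquelicot.
Open Scope R_scope.

Definition smooth (f : R -> R) : Prop := forall (n : nat) (x : R), ex_derive_n f n x.

Definition is_C1 (f : R -> R) : Prop :=
  forall x : R, ex_derive f x /\ continuous (Derive f) x.

(* f in L^infty(R); for continuous f this is plain boundedness. *)
Definition bounded_fun (f : R -> R) : Prop := exists M : R, forall x : R, Rabs (f x) <= M.

From Stdlib Require Import Reals Lra.
From Coquelicot Require Import Coquelicot.
Open Scope R_scope.

(* Each of the three laws comes from an identity A'(x) = f(x) - f(x+1) in which A and f
   have limits at both ends: A = sigma R, sigma V, sigma (V^2/2 + Phi(R)) with
   f = V, Phi'(R(. - 1)), Phi'(R(. - 1)) V, the last one by the chain rule and the two
   equations.  Then A(x) + int_x^(x+1) f has derivative 0, hence is constant, and its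
   limits at +oo and -oo are a_+ + f_+ and a_- + f_-. *)

Definition window (f : R -> R) (x : R) : R := RInt f x (x + 1).

Section Window.

Variable f : R -> R.
Hypothesis f_cont : forall x, continuous f x.

Lemma ex_RInt_continuous_fun (a b : R) : ex_RInt f a b.
Proof. exact (ex_RInt_continuous f a b (fun z _ => f_cont z)). Qed.

Lemma is_derive_window (x : R) : is_derive (window f) x (f (x + 1) - f x).
Proof.
  replace (f (x + 1) - f x) with (minus (scal 1 (f (x + 1))) (scal 1 (f x)))
    by (unfold scal; simpl; unfold mult; simpl; unfold minus, plus, opp; simpl; ring).
  apply (is_derive_RInt_bound_comp f (RInt f) (fun y => y) (fun y => y + 1)).
  - apply filter_forall; intros u. exact (RInt_correct f _ _ (ex_RInt_continuous_fun _ _)).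
  - apply f_cont.
  - apply f_cont.
  - auto_derive; [exact I | ring].
  - auto_derive; [exact I | ring].
Qed.

Lemma window_dist (l e x : R) :
  (forall t, x <= t <= x + 1 -> Rabs (f t - l) <= e) -> Rabs (window f x - l) <= e.
Proof.
  intros Hfl.
  assert (Hshift : window f x - l = RInt (fun t => f t - l) x (x + 1)).
  { rewrite (RInt_minus f (fun _ => l)), RInt_const;
      [| apply ex_RInt_continuous_fun | apply ex_RInt_const].
    unfold window, minus, plus, opp, scal; simpl; unfold mult; simpl. ring. }
  rewrite Hshift.
  replace e with ((x + 1 - x) * e) by ring.
  apply abs_RInt_le_const; [lra | | exact Hfl].
  apply (ex_RInt_continuous (fun t => f t - l)); intros z _.
  apply (continuous_minus f (fun _ => l)); [apply f_cont | apply continuous_const].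
Qed.

Lemma is_lim_window (s : Rbar) (l : R) :
  s = p_infty \/ s = m_infty -> is_lim f s l -> is_lim (window f) s l.
Proof.
  intros Hs Hfl.
  assert (Hwin : forall (e : posreal) x, (forall t, x <= t <= x + 1 -> Rabs (f t - l) < e / 2) ->
                  Rabs (window f x - l) < e).
  { intros e x Hx. apply Rle_lt_trans with (e / 2).
    - apply window_dist. intros t Ht. left. apply Hx, Ht.
    - destruct e; simpl; lra. }
  destruct Hs as [-> | ->]; apply is_lim_spec; apply is_lim_spec in Hfl;
    intros eps; destruct (Hfl (pos_div_2 eps)) as [M HM]; simpl in HM.
  - exists M. intros x Hx. apply Hwin. intros t Ht. apply HM. lra.
  - exists (M - 1). intros x Hx. apply Hwin. intros t Ht. apply HM. lra.
Qed.

End Window.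

Lemma is_derive_0_const (g : R -> R) : (forall x, is_derive g x 0) -> forall a b, g b = g a.
Proof.
  intros Hg a b.
  destruct (MVT_cor4 g (fun _ => 0) a (Rabs (b - a))) with (b := b) as [c [Hc _]];
    [intros; apply Hg | lra | lra].
Qed.

Lemma is_lim_const_fun (g : R -> R) (c : R) (s : Rbar) (l : R) :
  (forall x, g x = c) -> is_lim g s l -> l = c.
Proof.
  intros Hc Hl. apply (is_lim_ext g (fun _ => c)), is_lim_unique in Hl; [| exact Hc].
  rewrite Lim_const in Hl.
  now injection Hl.
Qed.

Lemma jump_condition (A f : R -> R) (ap am lp lm : R) :
  (forall x, continuous f x) -> (forall x, is_derive A x (f x - f (x + 1))) ->
  is_lim A p_infty ap -> is_lim A m_infty am ->
  is_lim f p_infty lp -> is_lim f m_infty lm ->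
  ap - am + (lp - lm) = 0.
Proof.
  intros Hf HA Hap Ham Hlp Hlm.
  set (G x := A x + window f x).
  assert (HG : forall x, G x = G 0).
  { apply is_derive_0_const. intros x.
    replace 0 with (f x - f (x + 1) + (f (x + 1) - f x)) by ring.
    apply (is_derive_plus A (window f)); [apply HA | apply is_derive_window, Hf]. }
  assert (Hp : ap + lp = G 0).
  { apply (is_lim_const_fun G _ p_infty); [exact HG |].
    apply is_lim_plus'; [exact Hap | apply is_lim_window; auto]. }
  assert (Hm : am + lm = G 0).
  { apply (is_lim_const_fun G _ m_infty); [exact HG |].
    apply is_lim_plus'; [exact Ham | apply is_lim_window; auto]. }
  lra.
Qed.

Lemma is_lim_shift (u : R -> R) (s : Rbar) (l : R) :
  s = p_infty \/ s = m_infty -> is_lim u s l -> is_lim (fun x => u (x - 1)) s l.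
Proof.
  intros Hs Hu. unfold is_lim. eapply filterlim_comp; [| exact Hu].
  destruct Hs as [-> | ->]; intros P [M HM]; exists (M + 1); intros x Hx; apply HM; lra.
Qed.

Section TravellingWave.

Variables (Phi : R -> R) (sigma : R) (Rf Vf : R -> R).
Hypothesis Phi_derivable : forall x, ex_derive Phi x.
Hypothesis Phi'_derivable : forall x, ex_derive (Derive Phi) x.
Hypothesis Rf_derivable : forall x, ex_derive Rf x.
Hypothesis Vf_derivable : forall x, ex_derive Vf x.
Hypothesis eq_R : forall phi, sigma * Derive Rf phi + Vf (phi + 1) - Vf phi = 0.
Hypothesis eq_V : forall phi,
  sigma * Derive Vf phi + Derive Phi (Rf phi) - Derive Phi (Rf (phi - 1)) = 0.

Definition stress (x : R) : R := Derive Phi (Rf (x - 1)).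

Lemma continuous_stress (x : R) : continuous stress x.
Proof.
  apply (ex_derive_continuous stress). unfold stress.
  auto_derive; repeat split; auto.
Qed.

Lemma is_lim_stress (s : Rbar) (r : R) :
  s = p_infty \/ s = m_infty -> is_lim Rf s r -> is_lim stress s (Derive Phi r).
Proof.
  intros Hs Hr. apply (is_lim_comp_continuous (fun x => Rf (x - 1))).
  - apply is_lim_shift; assumption.
  - apply (ex_derive_continuous (Derive Phi)), Phi'_derivable.
Qed.

Definition energy (v r : R) : R := / 2 * v ^ 2 + Phi r.

Lemma is_lim_energy (s : Rbar) (v r : R) :
  is_lim Vf s v -> is_lim Rf s r -> is_lim (fun x => energy (Vf x) (Rf x)) s (energy v r).
Proof.
  intros Hv Hr. unfold energy. apply is_lim_plus'.
  - apply (is_lim_ext (fun x => / 2 * (Vf x * Vf x))); [intros; ring |].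
    replace (/ 2 * v ^ 2) with (/ 2 * (v * v)) by ring.
    exact (is_lim_scal_l _ (/ 2) s (v * v) (is_lim_mult Vf Vf s v v Hv Hv I)).
  - apply is_lim_comp_continuous; [exact Hr |].
    apply (ex_derive_continuous Phi), Phi_derivable.
Qed.

Lemma is_derive_sigma_R (x : R) :
  is_derive (fun y => sigma * Rf y) x (Vf x - Vf (x + 1)).
Proof.
  replace (Vf x - Vf (x + 1)) with (sigma * Derive Rf x) by (specialize (eq_R x); lra).
  apply is_derive_scal, Derive_correct, Rf_derivable.
Qed.

Lemma is_derive_sigma_V (x : R) :
  is_derive (fun y => sigma * Vf y) x (stress x - stress (x + 1)).
Proof.
  unfold stress. replace (x + 1 - 1) with x by ring.
  replace (Derive Phi (Rf (x - 1)) - Derive Phi (Rf x)) with (sigma * Derive Vf x)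
    by (specialize (eq_V x); lra).
  apply is_derive_scal, Derive_correct, Vf_derivable.
Qed.

Lemma is_derive_sigma_energy (x : R) :
  is_derive (fun y => sigma * energy (Vf y) (Rf y)) x
    (stress x * Vf x - stress (x + 1) * Vf (x + 1)).
Proof.
  assert (HV : sigma * Derive Vf x = stress x - Derive Phi (Rf x))
    by (unfold stress; specialize (eq_V x); lra).
  assert (HR : sigma * Derive Rf x = Vf x - Vf (x + 1)) by (specialize (eq_R x); lra).
  replace (stress x * Vf x - stress (x + 1) * Vf (x + 1))
    with (Vf x * (sigma * Derive Vf x) + Derive Phi (Rf x) * (sigma * Derive Rf x)).
  - unfold energy. auto_derive; [repeat split; auto |].
    change (fun y => Vf y) with Vf; change (fun y => Rf y) with Rf;
      change (fun y => Phi y) with Phi.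
    field.
  - rewrite HV, HR. unfold stress. replace (x + 1 - 1) with x by ring. ring.
Qed.

End TravellingWave.

Theorem lemma2p1
  (Phi : R -> R) (sigma : R) (Rf Vf : R -> R) (rm rp vm vp : R)
  (HPhi : smooth Phi)
  (HR1 : is_C1 Rf) (HRb : bounded_fun Rf) (HV1 : is_C1 Vf) (HVb : bounded_fun Vf)
  (HRp : is_lim Rf p_infty rp) (HRm : is_lim Rf m_infty rm)
  (HVp : is_lim Vf p_infty vp) (HVm : is_lim Vf m_infty vm)
  (Heq1 : forall phi : R, sigma * Derive Rf phi + Vf (phi + 1) - Vf phi = 0)
  (Heq2 : forall phi : R,
      sigma * Derive Vf phi + Derive Phi (Rf phi) - Derive Phi (Rf (phi - 1)) = 0) :
  sigma * (rp - rm) + (vp - vm) = 0 /\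
  sigma * (vp - vm) + (Derive Phi rp - Derive Phi rm) = 0 /\
  sigma * ((/2 * vp ^ 2 + Phi rp) - (/2 * vm ^ 2 + Phi rm))
    + (Derive Phi rp * vp - Derive Phi rm * vm) = 0.
Proof.
  assert (dPhi : forall x, ex_derive Phi x) by (intros x; apply (HPhi 1%nat x)).
  assert (dPhi' : forall x, ex_derive (Derive Phi) x) by (intros x; apply (HPhi 2%nat x)).
  assert (dR : forall x, ex_derive Rf x) by (intros x; apply HR1).
  assert (dV : forall x, ex_derive Vf x) by (intros x; apply HV1).
  assert (cV : forall x, continuous Vf x) by (intros x; apply (ex_derive_continuous Vf), dV).
  assert (Hp : p_infty = p_infty \/ p_infty = m_infty) by now left.
  assert (Hm : m_infty = p_infty \/ m_infty = m_infty) by now right.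
  split; [| split].
  - assert (J := jump_condition _ _ (sigma * rp) (sigma * rm) vp vm cV
                   (is_derive_sigma_R sigma Rf Vf dR Heq1)
                   (is_lim_scal_l _ sigma _ _ HRp) (is_lim_scal_l _ sigma _ _ HRm) HVp HVm).
    lra.
  - assert (J := jump_condition _ _ (sigma * vp) (sigma * vm) (Derive Phi rp) (Derive Phi rm)
                   (continuous_stress Phi Rf dPhi' dR)
                   (is_derive_sigma_V Phi sigma Rf Vf dV Heq2)
                   (is_lim_scal_l _ sigma _ _ HVp) (is_lim_scal_l _ sigma _ _ HVm)
                   (is_lim_stress Phi Rf dPhi' _ _ Hp HRp) (is_lim_stress Phi Rf dPhi' _ _ Hm HRm)).
    lra.
  - assert (J := jump_condition _ (fun x => stress Phi Rf x * Vf x)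
                   (sigma * energy Phi vp rp) (sigma * energy Phi vm rm)
                   (Derive Phi rp * vp) (Derive Phi rm * vm)
                   (fun x => continuous_mult _ _ x (continuous_stress Phi Rf dPhi' dR x) (cV x))
                   (is_derive_sigma_energy Phi sigma Rf Vf dPhi dR dV Heq1 Heq2)
                   (is_lim_scal_l _ sigma _ _ (is_lim_energy Phi Rf Vf dPhi _ _ _ HVp HRp))
                   (is_lim_scal_l _ sigma _ _ (is_lim_energy Phi Rf Vf dPhi _ _ _ HVm HRm))
                   (is_lim_mult _ _ _ _ _ (is_lim_stress Phi Rf dPhi' _ _ Hp HRp) HVp I)
                   (is_lim_mult _ _ _ _ _ (is_lim_stress Phi Rf dPhi' _ _ Hm HRm) HVm I)).
    unfold energy in J. lra.
Qed.
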